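(* Let $m\ge2$ be an integer with $m\not\equiv2\pmod4$ and let $p,q$ be positive integers. If $\zeta_m^p,\zeta_m^{-p},\zeta_m^q,\zeta_m^{-q}$ are $\mathbb{Q}$-linearly independent, then for every choice of signs, $\Delta=\frac{\pm\zeta_m^p\pm\zeta_m^{-p}\pm\zeta_m^q\pm\zeta_m^{-q}}{2}$ is not an algebraic integer, where $\zeta_m=e^{\frac{2\pi}{m}i}$. *)

From mathcomp Require Import all_boot all_order all_algebra all_field.
Set Implicit Arguments. Unset Strict Implicit. Unset Printing Implicit Defensive.
Import Order.TTheory GRing.Theory Num.Theory.
Local Open Scope ring_scope.

(* zeta m = e^{2 pi i / m}: m.-root (-1) is the m-th root of -1 with minimal
   nonnegative argument, i.e. e^{i pi / m} (for m >= 2); its square is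
   e^{2 pi i / m}. *)
Definition zeta (m : nat) : algC := (m.-root (-1)) ^+ 2.

Definition Qlin_indep (s : seq algC) : Prop :=
  forall c : seq rat, size c = size s ->
    \sum_(i < size s) ratr (nth 0 c i) * nth 0 s i = 0 ->
    forall i, nth 0 c i = 0.

Definition sgn (b : bool) : algC := (-1) ^+ b.

From mathcomp Require Import all_boot all_order all_algebra all_field.
From mathcomp Require Import ring.
Set Implicit Arguments.
Unset Strict Implicit.
Unset Printing Implicit Defensive.
Import Order.TTheory GRing.Theory Num.Theory.
Local Open Scope ring_scope.

(* Put a = ζ^p and b = ζ^q. Flipping a sign changes Δ by an algebraic integer, so it
   suffices to show that 2 does not divide S = a + a⁻¹ + b + b⁻¹ among the algebraic
   integers. With x = b/a and y = 1/(ab) we have a⁻¹S = (1 + x)(1 + y), which is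
   congruent to (1 - x)(1 - y) modulo 2. For roots of unity x, y, the divisibility
   2 | (1 - x)(1 - y) forces x² = 1, y² = 1 or x² = y² = -1: 1 - x is coprime to 2
   unless the order of x is a power of 2, and for such orders squaring turns
   2 | (1 - x)(1 - y) into 4 | (1 - x²)(1 - y²), which sets up an induction on the
   order. The three cases give b = ±a, b⁻¹ = ±a or b = ±b⁻¹, contradicting linear
   independence. *)

Lemma dvdA_natE (n : nat) (z : algC) : (0 < n)%N -> (n %| z)%A = (z / n%:R \in Aint).
Proof. by move=> n_gt0; rewrite unfold_in /= pnatr_eq0 gtn_eqF. Qed.

Lemma dvdAA e : (e %| e)%A.
Proof. by rewrite -eqAmod0. Qed.

Lemma dvdA_mull e z x : (e %| x)%A -> z \in Aint -> (e %| z * x)%A.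
Proof. by rewrite -!eqAmod0 => ex Az; move/(eqAmodMl Az): ex; rewrite mulr0. Qed.

Lemma dvdA_mul d e x y : (d %| x)%A -> (e %| y)%A -> (d * e %| x * y)%A.
Proof.
rewrite ![(_ %| _)%A]unfold_in /= mulf_eq0.
have [_ /eqP-> | _] := eqVneq d 0; first by rewrite mul0r eqxx.
have [_ _ /eqP-> | _ /= xd ye] := eqVneq e 0; first by rewrite mulr0 eqxx.
by rewrite invfM mulrACA rpredM.
Qed.

Lemma dvdA_trans d e x : (d %| e)%A -> (e %| x)%A -> (d %| x)%A.
Proof.
rewrite ![(_ %| _)%A]unfold_in /=.
have [-> _ /eqP-> | e_neq0] := eqVneq e 0; first by rewrite mul0r rpred0 eqxx if_same.
case: eqP => // _ ed xe.
by rewrite -(divfK e_neq0 x) -[_ * e / d]mulrA rpredM.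
Qed.

Lemma dvdA_mul2l c d x : c != 0 -> (c * d %| c * x)%A = (d %| x)%A.
Proof.
move=> c_neq0; rewrite ![(_ %| _)%A]unfold_in /= !mulf_eq0 (negPf c_neq0) /=.
by case: eqP => // _; rewrite invfM mulrACA mulfV ?mul1r.
Qed.

Lemma not_dvdA2_1 : ~~ (2 %| 1)%A.
Proof. by rewrite -eqAmod0 (eqAmod0_nat 2 1). Qed.

Lemma not_dvdA4_2 : ~~ (4 %| 2)%A.
Proof. by rewrite -eqAmod0 (eqAmod0_nat 4 2). Qed.

Lemma dvdA2_of_dvdA4 z : (4 %| z)%A -> (2 %| z)%A.
Proof. by apply: dvdA_trans; rewrite -eqAmod0 (eqAmod0_nat 2 4). Qed.

Definition coprimeA e c := forall w, w \in Aint -> (e %| c * w)%A -> (e %| w)%A.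

Lemma coprimeA_factor e c g : g \in Aint -> coprimeA e (c * g) -> coprimeA e c.
Proof.
move=> Ag cop w Aw cw_div; apply: cop Aw _.
by rewrite -mulrA mulrCA; apply: dvdA_mull cw_div Ag.
Qed.

Lemma unity_root_Aint N (x : algC) : (0 < N)%N -> x ^+ N = 1 -> x \in Aint.
Proof. by move=> N_gt0 xN; apply: (Aint_unity_root N_gt0); rewrite unity_rootE xN. Qed.

Lemma unity_root_neq0 N (x : algC) : (0 < N)%N -> x ^+ N = 1 -> x != 0.
Proof.
move=> N_gt0 xN; apply: contra_eq_neq xN => ->.
by rewrite expr0n gtn_eqF // eq_sym oner_eq0.
Qed.

Lemma unity_rootV N (x : algC) : x ^+ N = 1 -> x^-1 ^+ N = 1.
Proof. by move=> xN; rewrite exprVn xN invr1. Qed.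

Lemma factor_1subrX (x : algC) k :
  x \in Aint -> exists2 g, g \in Aint & 1 - x ^+ k = (1 - x) * g.
Proof.
move=> Ax; exists (\sum_(i < k) x ^+ i); first by apply: rpred_sum => i _; apply: rpredX.
by rewrite -opprB subrX1 -mulNr opprB.
Qed.

Lemma coprimeA2_1subr_odd d (z : algC) :
  odd d -> z ^+ d = 1 -> z != 1 -> coprimeA 2 (1 - z).
Proof.
move=> odd_d zd z_neq1 w Aw zw_even.
have Az : z \in Aint := unity_root_Aint (odd_gt0 odd_d) zd.
have geom0 : \sum_(k < d) z ^+ k = 0.
  apply/eqP; have /eqP := subrX1 z d; rewrite zd subrr eq_sym mulf_eq0 subr_eq0.
  by rewrite (negPf z_neq1).
have dw_even : (2 %| d%:R * w)%A.
  have -> : d%:R * w = \sum_(k < d) (1 - z ^+ k) * w.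
    by rewrite -mulr_suml sumrB geom0 subr0 sumr_const card_ord mulr_natl.
  apply: rpred_sum => k _; have [g Ag ->] := factor_1subrX k Az.
  by rewrite -mulrA mulrCA; apply: dvdA_mull zw_even Ag.
have d_odd_mod2 : (d%:R == 1 %[mod 2])%A by rewrite (eqAmod_nat 2 d 1) modn2 odd_d.
rewrite -eqAmod0 in dw_even; rewrite -eqAmod0; apply: eqAmod_trans _ dw_even.
by rewrite eqAmod_sym -[X in (_ == X %[mod _])%A]mul1r eqAmodMr.
Qed.

Lemma unity_root_pow2_or_coprimeA2 N (x : algC) : (0 < N)%N -> x ^+ N = 1 ->
  x ^+ (2 ^ logn 2 N) = 1 \/ coprimeA 2 (1 - x).
Proof.
move=> N_gt0 xN; have [d odd_d defN] := pfactor_coprime (isT : prime 2) N_gt0.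
rewrite coprime2n in odd_d.
have [|x2e_neq1] := eqVneq (x ^+ (2 ^ logn 2 N)) 1; [by left | right].
have [g Ag Eg] := factor_1subrX (2 ^ logn 2 N) (unity_root_Aint N_gt0 xN).
apply: (coprimeA_factor Ag); rewrite -Eg.
by apply: coprimeA2_1subr_odd odd_d _ x2e_neq1; rewrite -exprM mulnC -defN.
Qed.

Lemma dvdA2_1addrM (x y : algC) : x \in Aint -> y \in Aint ->
  (2 %| (1 + x) * (1 + y))%A = (2 %| (1 - x) * (1 - y))%A.
Proof.
move=> Ax Ay; have -> : (1 + x) * (1 + y) = (1 - x) * (1 - y) + (x + y) * 2 by ring.
have xy2_even : (2 %| (x + y) * 2)%A := dvdA_mull (dvdAA 2) (rpredD Ax Ay).
by rewrite rpredDr.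
Qed.

Lemma dvdA4_1subrM_sqr (x y : algC) : x \in Aint -> y \in Aint ->
  (2 %| (1 - x) * (1 - y))%A -> (4 %| (1 - x ^+ 2) * (1 - y ^+ 2))%A.
Proof.
move=> Ax Ay xy_even.
have -> : (1 - x ^+ 2) * (1 - y ^+ 2) = (1 - x) * (1 - y) * ((1 + x) * (1 + y)) by ring.
by have := dvdA_mul xy_even (etrans (dvdA2_1addrM Ax Ay) xy_even); rewrite -natrM.
Qed.

Lemma sqr_eq1_of_dvdA2_1subr_pow2 e (x : algC) :
  x ^+ (2 ^ e) = 1 -> (2 %| 1 - x)%A -> x ^+ 2 = 1.
Proof.
elim: e x => [|e IH] x x2e x_even.
  by move: x2e; rewrite expr1 => ->; rewrite expr1n.
have Ax : x \in Aint := unity_root_Aint (expn_gt0 2 e.+1) x2e.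
have x2_div4 : (4 %| 1 - x ^+ 2)%A.
  by have := dvdA4_1subrM_sqr Ax Aint0; rewrite expr0n /= subr0 !mulr1; apply.
have x2_2e : (x ^+ 2) ^+ (2 ^ e) = 1 by rewrite -exprM -expnS.
have /eqP := IH _ x2_2e (dvdA2_of_dvdA4 x2_div4).
rewrite sqrf_eq1 => /orP[/eqP // | /eqP x2N1].
by move: x2_div4; rewrite x2N1 opprK (negPf not_dvdA4_2).
Qed.

Lemma sqr_eq1_of_dvdA2_1subr N (x : algC) : (0 < N)%N -> x ^+ N = 1 ->
  (2 %| 1 - x)%A -> x ^+ 2 = 1.
Proof.
move=> N_gt0 xN x_even.
case: (unity_root_pow2_or_coprimeA2 N_gt0 xN) => [x2e | cop_x].
  exact: sqr_eq1_of_dvdA2_1subr_pow2 x2e x_even.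
by have := cop_x 1 Aint1; rewrite !mulr1 (negPf not_dvdA2_1) => /(_ x_even).
Qed.

Lemma not_dvdA4_1subrM_sqrN1 (u v : algC) :
  u ^+ 2 = -1 -> v ^+ 2 = -1 -> ~~ (4 %| (1 - u) * (1 - v))%A.
Proof.
move=> u2 v2; have Av : v \in Aint.
  by apply: (@unity_root_Aint 4) => //; rewrite (exprM v 2 2) v2 sqrrN expr1n.
have /eqP : (u - v) * (u + v) = 0 by rewrite -subr_sqr u2 v2 subrr.
rewrite mulf_eq0 subr_eq0 addr_eq0 => /orP[] /eqP ->; apply: contra not_dvdA4_2.
  move=> /dvdA_mull/(_ Av).
  have -> : v * ((1 - v) * (1 - v)) = v * (1 + v ^+ 2) - 2 * v ^+ 2 by ring.
  by rewrite v2 subrr mulr0 sub0r mulrN1 opprK.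
have -> : (1 - - v) * (1 - v) = 1 - v ^+ 2 by ring.
by rewrite v2 opprK.
Qed.

Lemma sqr_cases_of_dvdA2_1subrM_pow2 e (x y : algC) :
  x ^+ (2 ^ e) = 1 -> y ^+ (2 ^ e) = 1 -> (2 %| (1 - x) * (1 - y))%A ->
  x ^+ 2 = 1 \/ y ^+ 2 = 1 \/ x ^+ 2 = -1 /\ y ^+ 2 = -1.
Proof.
elim: e x y => [|e IH] x y x2e y2e xy_even.
  by left; move: x2e; rewrite expr1 => ->; rewrite expr1n.
have [Ax Ay] : x \in Aint /\ y \in Aint.
  by split; apply: unity_root_Aint (expn_gt0 2 e.+1) _.
have sqr_2e (z : algC) : z ^+ (2 ^ e.+1) = 1 -> (z ^+ 2) ^+ (2 ^ e) = 1.
  by rewrite -exprM -expnS.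
have xy_div4 := dvdA4_1subrM_sqr Ax Ay xy_even.
have sqr_other (u v : algC) : v ^+ (2 ^ e) = 1 -> u = -1 ->
    (4 %| (1 - u) * (1 - v))%A -> v = 1 \/ v = -1.
  have two_neq0 : (2 : algC) != 0 by rewrite pnatr_eq0.
  move=> v2e ->; rewrite -[4]/(2 * 2)%:R natrM opprK (@dvdA_mul2l 2 2 (1 - v) two_neq0).
  move/(sqr_eq1_of_dvdA2_1subr_pow2 v2e)/eqP; rewrite sqrf_eq1.
  by case/orP => /eqP; [left | right].
case: (IH _ _ (sqr_2e x x2e) (sqr_2e y y2e) (dvdA2_of_dvdA4 xy_div4)) => [|[|[]]].
- move/eqP; rewrite sqrf_eq1 => /orP[/eqP x21 | /eqP x2N1]; first by left.
  by case: (sqr_other _ _ (sqr_2e y y2e) x2N1 xy_div4); [right; left | right; right].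
- move/eqP; rewrite sqrf_eq1 => /orP[/eqP y21 | /eqP y2N1]; first by right; left.
  rewrite mulrC in xy_div4.
  by case: (sqr_other _ _ (sqr_2e x x2e) y2N1 xy_div4); [left | right; right].
- by move=> x4 y4; rewrite (negPf (not_dvdA4_1subrM_sqrN1 x4 y4)) in xy_div4.
Qed.

Lemma sqr_cases_of_dvdA2_1subrM N (x y : algC) : (0 < N)%N ->
  x ^+ N = 1 -> y ^+ N = 1 -> (2 %| (1 - x) * (1 - y))%A ->
  x ^+ 2 = 1 \/ y ^+ 2 = 1 \/ x ^+ 2 = -1 /\ y ^+ 2 = -1.
Proof.
move=> N_gt0 xN yN xy_even.
have [Ax Ay] := (unity_root_Aint N_gt0 xN, unity_root_Aint N_gt0 yN).
case: (unity_root_pow2_or_coprimeA2 N_gt0 xN) => [x2e | cop_x]; last first.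
  right; left; apply: sqr_eq1_of_dvdA2_1subr N_gt0 yN (cop_x _ _ xy_even).
  by rewrite rpredB.
case: (unity_root_pow2_or_coprimeA2 N_gt0 yN) => [y2e | cop_y]; last first.
  rewrite mulrC in xy_even.
  left; apply: sqr_eq1_of_dvdA2_1subr N_gt0 xN (cop_y _ _ xy_even).
  by rewrite rpredB.
exact: sqr_cases_of_dvdA2_1subrM_pow2 x2e y2e xy_even.
Qed.

Lemma Qlin_indep_nth_neq (b : bool) (s : seq algC) i j :
  Qlin_indep s -> (i < size s)%N -> (j < size s)%N -> i != j ->
  nth 0 s i != sgn b * nth 0 s j.
Proof.
move=> indep lt_i lt_j neq_ij; apply/eqP => Eij.
have pick_nth l : (l < size s)%N ->
    \sum_(k < size s) (k == l :> nat)%:R * nth 0 s k = nth 0 s l.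
  move=> lt_l; transitivity (\sum_(k < size s | k == l :> nat) nth 0 s k).
    by rewrite [RHS]big_mkcond; apply: eq_bigr => k _; rewrite mulr_natl mulrb.
  by rewrite big_ord1_eq lt_l.
pose c := mkseq (fun k => (k == i)%:R - (-1) ^+ b * (k == j)%:R : rat) (size s).
have sum0 : \sum_(k < size s) ratr c`_k * s`_k = 0.
  under eq_bigr => k _ do
    rewrite nth_mkseq // rmorphB rmorphM rmorph_sign !rmorph_nat mulrBl -mulrA.
  by rewrite sumrB -mulr_sumr !pick_nth // Eij subrr.
have /eqP := indep c (size_mkseq _ _) sum0 i.
by rewrite nth_mkseq // eqxx (negPf neq_ij) mulr0 subr0 oner_eq0.
Qed.

Lemma sqrf_eq1_sgn (u : algC) : u ^+ 2 = 1 -> exists b, u = sgn b.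
Proof. by move/eqP; rewrite sqrf_eq1 => /orP[] /eqP->; [exists false | exists true]. Qed.

Lemma sgn_eqAmod2 b w : w \in Aint -> (sgn b * w == w %[mod 2])%A.
Proof.
move=> Aw; case: b; rewrite /sgn /= ?mul1r // mulN1r /eqAmod.
have -> : - w - w = - (w * 2) by ring.
by rewrite rpredN; apply: dvdA_mull (dvdAA 2) Aw.
Qed.

Lemma sgn_relation_of_dvdA2_sumV N (a b : algC) : (0 < N)%N -> a ^+ N = 1 -> b ^+ N = 1 ->
  (2 %| a + a^-1 + b + b^-1)%A ->
  exists e, [\/ b = sgn e * a, b^-1 = sgn e * a | b = sgn e * b^-1].
Proof.
move=> N_gt0 aN bN S_even.
have [a_neq0 b_neq0] := (unity_root_neq0 N_gt0 aN, unity_root_neq0 N_gt0 bN).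
have [Aa Aai] := (unity_root_Aint N_gt0 aN, unity_root_Aint N_gt0 (unity_rootV aN)).
have [Ab Abi] := (unity_root_Aint N_gt0 bN, unity_root_Aint N_gt0 (unity_rootV bN)).
pose x := b / a; pose y := a^-1 / b.
have [Ax Ay] : x \in Aint /\ y \in Aint by split; apply: rpredM.
have [xN yN] : x ^+ N = 1 /\ y ^+ N = 1 by rewrite !exprMn !exprVn aN bN invr1 !mulr1.
have xy_even : (2 %| (1 - x) * (1 - y))%A.
  rewrite -dvdA2_1addrM //.
  have -> : (1 + x) * (1 + y) = a^-1 * (a + a^-1 + b + b^-1).
    by rewrite /x /y; field; rewrite a_neq0 b_neq0.
  exact: (dvdA_mull S_even Aai).
case: (sqr_cases_of_dvdA2_1subrM N_gt0 xN yN xy_even) => [|[|[x2 y2]]].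
- by case/sqrf_eq1_sgn => e x_sgn; exists e; apply: Or31; rewrite -x_sgn /x divfK.
- case/sqrf_eq1_sgn => e y_sgn; exists e; apply: Or32.
  by rewrite -y_sgn /y mulrAC mulVf ?mul1r.
- have /sqrf_eq1_sgn[e b2_sgn] : (b ^+ 2) ^+ 2 = 1.
    have -> : b ^+ 2 = x / y by rewrite /x /y; field; rewrite a_neq0 b_neq0.
    by rewrite expr_div_n x2 y2 divff // oppr_eq0 oner_eq0.
  by exists e; apply: Or33; rewrite -b2_sgn expr2 mulfK.
Qed.

Lemma zeta_unity_root m k : (0 < m)%N -> (zeta m ^+ k) ^+ m = 1.
Proof.
move=> m_gt0.
have zeta_m : zeta m ^+ m = 1 by rewrite /zeta -exprM mulnC exprM rootCK // sqrrN expr1n.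
by rewrite -exprM mulnC exprM zeta_m expr1n.
Qed.

Theorem lemma9p16 (m p q : nat) :
  (2 <= m)%N -> (m %% 4 != 2)%N -> (0 < p)%N -> (0 < q)%N ->
  Qlin_indep [:: zeta m ^+ p; zeta m ^- p; zeta m ^+ q; zeta m ^- q] ->
  forall s1 s2 s3 s4 : bool,
    (sgn s1 * zeta m ^+ p + sgn s2 * zeta m ^- p
     + sgn s3 * zeta m ^+ q + sgn s4 * zeta m ^- q) / 2 \notin Aint.
Proof.
move=> m_ge2 _ _ _ indep s1 s2 s3 s4.
have m_gt0 : (0 < m)%N by apply: leq_trans m_ge2.
have [am bm] := (zeta_unity_root p m_gt0, zeta_unity_root q m_gt0).
set a := zeta m ^+ p in indep am *; set b := zeta m ^+ q in indep bm *.
have Aint_unity z : z ^+ m = 1 -> z \in Aint /\ z^-1 \in Aint.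
  by move=> zm; split; apply: (unity_root_Aint m_gt0); rewrite // unity_rootV.
have [[Aa Aai] [Ab Abi]] := (Aint_unity a am, Aint_unity b bm).
rewrite -(@dvdA_natE 2) //; apply/negP => Delta_even.
have S_even : (2 %| a + a^-1 + b + b^-1)%A.
  rewrite -eqAmod0 in Delta_even; rewrite -eqAmod0; apply: eqAmod_trans _ Delta_even.
  by rewrite eqAmod_sym; repeat apply: eqAmodD; apply: sgn_eqAmod2.
have [e] := sgn_relation_of_dvdA2_sumV m_gt0 am bm S_even.
have neq_indep i j : (i < 4)%N -> (j < 4)%N -> i != j ->
    nth 0 [:: a; a^-1; b; b^-1] i != sgn e * nth 0 [:: a; a^-1; b; b^-1] j.
  exact: (Qlin_indep_nth_neq e indep).
case=> E.
- by have := neq_indep 2 0 isT isT isT; rewrite /= -E eqxx.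
- by have := neq_indep 3 0 isT isT isT; rewrite /= -E eqxx.
- by have := neq_indep 2 3 isT isT isT; rewrite /= -E eqxx.
Qed.
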